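(* Let $n\ge1$, let $\lambda=(\lambda_0,\dots,\lambda_n)$ be a marking of $A_n$ with $\lambda_0\ge\lambda_1\ge\cdots\ge\lambda_n$, and let $(U_1,U_2)$ be any admissible decomposition of $(P_n,A_n,\lambda)$. Then the number of lattice points in $\mathcal{CO}_{U_1,U_2}(\lambda)$ is $$\prod_{0\le i<j\le n}\frac{\lambda_i-\lambda_j+j-i}{j-i}.$$
   Context: $P_n$ is the poset on $\{p_{i,j}: 0\le i\le j\le n\}$ whose cover relations are exactly $p_{i-1,j}\to p_{i,j}\to p_{i-1,j-1}$ for $1\le i\le j\le n$ ($q\to p$ means $p$ covers $q$). $A_n=\{p_{0,0},\dots,p_{0,n}\}$ with marking $\lambda(p_{0,k})=\lambda_k\in\mathbb{Z}_{\ge0}$. A decomposition is a pair $(U_1,U_2)$ of disjoint sets with $U_1\cup U_2=P_n\setminus A_n$; it is admissible if there are no $u_1\in U_1$, $u_2\in U_2$ with $u_1\prec u_2$. With $A_1=A_n\cup U_1$, the marked chain-order polytope $\mathcal{CO}_{U_1,U_2}(\lambda)\subset\mathbb{R}^{P_n\setminus A_n}$ is the set of $(x_p)$ such that: (i) $x_p\le\lambda_a$ whenever $p\in U_1$, $a\in A_n$, $p\prec a$; (ii) $\lambda_b\le x_q$ whenever $q\in U_1$, $b\in A_n$, $b\prec q$; (iii) $x_p\le x_q$ whenever $p,q\in U_1$, $p\prec q$; (iv) $x_p\ge0$ for $p\in U_2$; (v) for every chain $b\prec p_m\prec\cdots\prec p_1\prec a$ with $m\ge1$, $a,b\in A_1$,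 $p_i\in U_2$: $x_{p_1}+\cdots+x_{p_m}\le\lambda_a-\lambda_b$, where $\lambda_q$ means $x_q$ for $q\in U_1$; (vi) for every chain $p_1\prec\cdots\prec p_s\prec q$ with $q\in U_1$, $p_i\in U_2$: $x_{p_1}+\cdots+x_{p_s}\le x_q$. (Here $\lambda_a$ for $a=p_{0,k}$ means $\lambda_k$.) Lattice points are the points of $\mathcal{CO}_{U_1,U_2}(\lambda)\cap\mathbb{Z}^{P_n\setminus A_n}$. *)

From mathcomp Require Import all_boot all_order all_algebra.
Set Implicit Arguments. Unset Strict Implicit. Unset Printing Implicit Defensive.
Import Order.TTheory GRing.Theory Num.Theory.

(* Ambient index type: pairs (i,j) with 0 <= i,j <= n; p_{i,j} is the pair (i,j). *)
Definition T (n : nat) := ('I_n.+1 * 'I_n.+1)%type.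

Definition Pn (n : nat) : {set T n} := [set p : T n | (p.1 <= p.2)%N].

Definition An (n : nat) : {set T n} := [set p : T n | (p.1 : nat) == 0%N].

(* Cover relation: cov q p  means  "p covers q" (q -> p):
   p_{i-1,j} -> p_{i,j}  and  p_{i,j} -> p_{i-1,j-1}, for 1 <= i <= j <= n. *)
Definition cov (n : nat) (q p : T n) : bool :=
  [&& q \in Pn n, p \in Pn n &
      ((((p.1 : nat) == (q.1 : nat).+1) && ((p.2 : nat) == q.2))
    || (((q.1 : nat) == (p.1 : nat).+1) && ((q.2 : nat) == (p.2 : nat).+1)))].

Definition prec (n : nat) (q p : T n) : bool := connect (@cov n) q p && (q != p).

Definition is_decomposition (n : nat) (U1 U2 : {set T n}) : Prop :=
  U1 :&: U2 = set0 /\ U1 :|: U2 = Pn n :\: An n.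

Definition admissible (n : nat) (U1 U2 : {set T n}) : Prop :=
  ~ (exists u1 u2, [/\ u1 \in U1, u2 \in U2 & prec u1 u2]).

Definition Dom (n : nat) := {p : T n | p \in Pn n :\: An n}.

(* Points of R^{P_n \ A_n} with integer coordinates. *)
Definition IPoint (n : nat) := {ffun Dom n -> int}.

(* x_p for p in P_n \ A_n (0 elsewhere, never used there). *)
Definition xv (n : nat) (x : IPoint n) (p : T n) : int :=
  if (insub p : option (Dom n)) is Some d then x d else 0.

Definition lamv (n : nat) (lam : 'I_n.+1 -> nat) (a : T n) : int := (lam a.2)%:Z.

(* lambda_q for q in A_1 = A_n ∪ U_1 (x_q if q in U_1). *)
Definition ext (n : nat) (lam : 'I_n.+1 -> nat) (x : IPoint n) (q : T n) : int :=
  if q \in An n then lamv lam q else xv x q.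

Definition inCO (n : nat) (lam : 'I_n.+1 -> nat) (U1 U2 : {set T n})
  (x : IPoint n) : Prop :=
  [/\ forall p a, p \in U1 -> a \in An n -> prec p a -> xv x p <= lamv lam a,
      forall q b, q \in U1 -> b \in An n -> prec b q -> lamv lam b <= xv x q,
      forall p q, p \in U1 -> q \in U1 -> prec p q -> xv x p <= xv x q,
      forall p, p \in U2 -> 0 <= xv x p &
     (      (* (v) chain b < c_0 < ... < c_last < a, c = [p_m; ...; p_1] *)
      forall (a b : T n) (c : seq (T n)),
        a \in An n :|: U1 -> b \in An n :|: U1 -> c != [::] ->
        all (fun p => p \in U2) c -> path (@prec n) b (rcons c a) ->
        \sum_(p <- c) xv x p <= ext lam x a - ext lam x b) /\
     ((* (vi) chain c_0 < ... < c_last < q, c = [p_1; ...; p_s] *)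
      forall (q : T n) (c : seq (T n)),
        q \in U1 -> c != [::] -> all (fun p => p \in U2) c ->
        sorted (@prec n) (rcons c q) ->
        \sum_(p <- c) xv x p <= xv x q)]%R.

From mathcomp Require Import all_boot all_order all_algebra perm zify ring.
Set Implicit Arguments. Unset Strict Implicit. Unset Printing Implicit Defensive.
Import Order.TTheory GRing.Theory Num.Theory.

(* A lattice point of CO_{U1,U2}(lam) is the image of a unique order-preserving map
   g : P_n -> N extending lam on A_n: the point keeps x_p = g p on U_1 and records the
   jump x_p = g p - max_{q <. p} g q on U_2.  Conversely g is rebuilt by descending
   along maximal lower covers; admissibility keeps these descending chains inside U_2
   until they reach A_n, and constraint (v) on them makes g order-preserving.
   Raising the k-th entry of row i of g (read from column n) by k turns such maps into
   Gelfand-Tsetlin patterns whose consecutive rows interlace strictly.  Summing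
   det('C(b_i, j)) over the rows b interlacing a row a telescopes by the hockey-stick
   identity to det('C(a_i, j)), so the patterns are counted by det('C(lam_(n-i) + i, j)),
   a Vandermonde determinant divided by prod_j j!, which is the product formula. *)

Fixpoint interlacings (a : seq nat) : seq (seq nat) :=
  if a is x :: (y :: _) as a' then
    [seq t :: b | t <- iota x (y - x), b <- interlacings a']
  else [:: [::]].

Lemma interlacings_cons x y a :
  interlacings [:: x, y & a] =
  [seq t :: b | t <- iota x (y - x), b <- interlacings (y :: a)].
Proof. by []. Qed.

Lemma mem_interlacings a b :
  b \in interlacings a <->
  size b = (size a).-1 /\
  forall i, i < size b -> nth 0 a i <= nth 0 b i < nth 0 a i.+1.
Proof.
elim: a b => [|x [|y a] IHa] b.
1,2: by case: b => [|t b]; rewrite inE; split=> //; case.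
rewrite interlacings_cons; split.
  case/allpairsPdep => t [b'] [+ /IHa [size_b' b'_int] ->].
  rewrite mem_iota => /andP [x_le_t t_lt]; split=> [|[|i]] /=; first by rewrite size_b'.
    by rewrite x_le_t; lia.
  by rewrite ltnS; apply: b'_int.
case: b => [|t b] [//= [size_b] b_int]; apply/allpairsPdep; exists t, b; split=> //.
  by rewrite mem_iota; have := b_int 0 isT => /=; lia.
by apply/IHa; split=> // i; apply: (b_int i.+1).
Qed.

Lemma interlacings_uniq a : uniq (interlacings a).
Proof.
elim: a => [|x [|y a] IHa] //; rewrite interlacings_cons.
apply: allpairs_uniq_dep => //; first exact: iota_uniq.
by case=> [u v] [u' v'] _ _ /= [-> ->].
Qed.

Lemma interlacings_sorted a b :
  sorted leq a -> b \in interlacings a -> sorted leq b.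
Proof.
move=> /(sortedP 0) a_sorted /mem_interlacings [size_b b_int].
apply/(sortedP 0) => i lt_i.
have := b_int i (ltnW lt_i); have := b_int i.+1 lt_i; lia.
Qed.

(* Gelfand-Tsetlin patterns with top row [a], listed without the top row. *)
Fixpoint gt_patterns (m : nat) (a : seq nat) : seq (seq (seq nat)) :=
  if m is m'.+1 then [seq b :: P | b <- interlacings a, P <- gt_patterns m' b]
  else [:: [::]].

Lemma mem_gt_patterns m a P :
  (P \in gt_patterns m a) = (size P == m) && path (fun u v => v \in interlacings u) a P.
Proof.
elim: m a P => [|m IHm] a [|b P] //=.
  by apply/allpairsPdep => -[? [? []]].
apply/allpairsPdep/and3P => [[b' [P'] [b'_int P'_pat [-> ->]]]|[size_P b_int P_path]].
  by move: P'_pat; rewrite IHm b'_int => /andP [].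
by exists b, P; rewrite IHm -eqSS size_P P_path.
Qed.

Lemma gt_patterns_uniq m a : uniq (gt_patterns m a).
Proof.
elim: m a => [|m IHm] a //=.
apply: allpairs_uniq_dep => //; first exact: interlacings_uniq.
by case=> [u v] [u' v'] _ _ /= [-> ->].
Qed.


Section BinomialDeterminant.
Variable R : numFieldType.
Local Open Scope ring_scope.

Definition ffact_poly (j : nat) : {poly R} :=
  \prod_(c <- [seq k%:R | k <- iota 0 j]) ('X - c%:P).

Lemma horner_ffact_poly (x j : nat) : (ffact_poly j).[x%:R] = (x ^_ j)%:R.
Proof.
rewrite /ffact_poly horner_prod.
elim: j => [|j IHj]; first by rewrite big_nil ffactn0.
rewrite -addn1 iotaD map_cat big_cat big_seq1 /= add0n hornerXsubC IHj.
rewrite addn1 ffactnSr natrM.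
by case: (leqP j x) => [le_jx|lt_xj]; [rewrite natrB | rewrite ffact_small // !mul0r].
Qed.

Lemma size_ffact_poly j : size (ffact_poly j) = j.+1.
Proof. by rewrite size_prod_XsubC size_map size_iota. Qed.

Lemma ffact_poly_monic j : ffact_poly j \is monic.
Proof. exact: monic_prod_XsubC. Qed.

Lemma natr_bin_ffact_poly (x j : nat) :
  'C(x, j)%:R = (ffact_poly j).[x%:R] / (j`!)%:R :> R.
Proof.
by rewrite horner_ffact_poly -bin_ffact natrM mulfK // pnatr_eq0 -lt0n fact_gt0.
Qed.

Definition binom_mx m (a : nat -> nat) : 'M[R]_m := \matrix_(i, j) 'C(a i, j)%:R.

Lemma det_binom_mx_fact m a :
  \det (binom_mx m a) =
  (\prod_(i < m) \prod_(j < m | (i < j)%N) ((a j)%:R - (a i)%:R)) /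
  \prod_(j < m) (j`!)%:R.
Proof.
pose V := Vandermonde m (\row_j (a j)%:R : 'rV[R]_m).
pose Q : 'M[R]_m := \matrix_(k, j) (ffact_poly j)`_k.
pose D : 'M[R]_m := diag_mx (\row_j ((j`!)%:R)^-1).
have -> : binom_mx m a = V^T *m Q *m D.
  apply/matrixP => i j; rewrite mul_mx_diag !mxE natr_bin_ffact_poly.
  rewrite (@horner_coef_wide _ m) ?size_ffact_poly //; congr (_ * _).
  by apply: eq_bigr => k _; rewrite !mxE mulrC.
have detQ : \det Q = 1.
  rewrite -det_tr det_trig; last first.
    by apply/is_trig_mxP => i j lt_ij; rewrite !mxE nth_default ?size_ffact_poly.
  apply: big1 => j _; rewrite !mxE.
  by have /monicP := ffact_poly_monic j; rewrite /lead_coef size_ffact_poly.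
rewrite !det_mulmx det_tr det_Vandermonde detQ mulr1 det_diag -prodfV.
by congr (_ * _); apply: eq_bigr => i _; rewrite ?mxE //;
  apply: eq_bigr => j _; rewrite !mxE.
Qed.

Lemma prod_fact_pairs m :
  \prod_(j < m) (j`!)%:R =
  \prod_(i < m) \prod_(j < m | (i < j)%N) ((j : nat)%:R - (i : nat)%:R) :> R.
Proof.
have det1 : \det (binom_mx m id) = 1.
  rewrite det_trig; last by apply/is_trig_mxP => i j lt_ij; rewrite mxE bin_small.
  by apply: big1 => i _; rewrite mxE binn.
have nz : \prod_(j < m) (j`!)%:R != 0 :> R.
  by rewrite prodf_seq_neq0; apply/allP => j _; rewrite pnatr_eq0 -lt0n fact_gt0.
by move: det1; rewrite det_binom_mx_fact => /divr1_eq.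
Qed.

Lemma det_binom_mx m a :
  \det (binom_mx m a) =
  \prod_(i < m) \prod_(j < m | (i < j)%N)
    (((a j)%:R - (a i)%:R) / ((j : nat)%:R - (i : nat)%:R)).
Proof.
rewrite det_binom_mx_fact prod_fact_pairs -prodfV -big_split /=.
by apply: eq_bigr => i _; rewrite -prodfV -big_split.
Qed.

Lemma sum_subdiag n (F : nat -> R) (i : nat) :
  \sum_(k < n) (i == k.+1)%:R * F k = if (0 < i <= n)%N then F i.-1 else 0.
Proof.
elim: n => [|n IHn]; first by rewrite big_ord0; case: i => [|i] //=; rewrite andbF.
rewrite big_ord_recr /= IHn; case: i {IHn} => [|i] /=; first by rewrite mul0r addr0.
by rewrite eqSS ltnS; case: ltngtP => [||->]; rewrite ?mul0r ?addr0 ?mul1r ?add0r.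
Qed.

(* Subtracting from each row the previous one leaves [1, 0, ..., 0] in the first
   column; [L] performs these row operations. *)
Lemma det_binom_mx_diff m (a : nat -> nat) :
  \det (binom_mx m.+2 a) =
  \det (\matrix_(i < m.+1, j < m.+1) ('C(a i.+1, j.+1)%:R - 'C(a i, j.+1)%:R)).
Proof.
pose L : 'M[R]_m.+2 := 1%:M - \matrix_(i, j) (i == j.+1 :> nat)%:R.
have detL : \det L = 1.
  rewrite det_trig; last first.
    apply/is_trig_mxP => i j lt_ij; rewrite !mxE.
    by rewrite -val_eqE /= !ltn_eqF ?subrr // ltnW.
  by apply: big1 => i _; rewrite !mxE eqxx ltn_eqF ?subr0.
have LE i j : (L *m binom_mx m.+2 a) i j =
    'C(a i, j)%:R - (if (0 < i)%N then 'C(a i.-1, j)%:R else 0).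
  rewrite mulmxBl mul1mx !mxE; congr (_ - _).
  under eq_bigr do rewrite !mxE.
  rewrite (sum_subdiag m.+2 (fun k => 'C(a k, j)%:R)).
  by case: (nat_of_ord i) (ltn_ord i) => [|i'] //= /ltnW ->.
rewrite -[LHS]mul1r -{1}detL -det_mulmx (expand_det_col _ ord0) big_ord_recl.
rewrite big1 => [|i _]; last by rewrite LE /= !bin0 subrr mul0r.
rewrite LE /= subr0 bin0 mul1r addr0 /cofactor /= expr0 mul1r.
by congr (\det _); apply/matrixP => i j; rewrite [LHS]mxE [LHS]mxE LE mxE.
Qed.

Lemma sum_iota_binom (x k j : nat) :
  \sum_(t <- iota x k) 'C(t, j)%:R = 'C(x + k, j.+1)%:R - 'C(x, j.+1)%:R :> R.
Proof.
elim: k => [|k IHk]; first by rewrite big_nil addn0 subrr.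
by rewrite -addn1 iotaD big_cat big_seq1 IHk addnA addn1 binS natrD addrAC.
Qed.

Lemma sum_interlacings_prod (a : seq nat) (h : nat -> nat -> R) :
  \sum_(b <- interlacings a) \prod_(i < (size a).-1) h i (nth 0 b i) =
  \prod_(i < (size a).-1) \sum_(t <- iota (nth 0 a i) (nth 0 a i.+1 - nth 0 a i)) h i t.
Proof.
elim: a h => [|x [|y a] IHa] h; try by rewrite big_seq1 !big_ord0.
rewrite interlacings_cons big_allpairs_dep big_ord_recl big_distrl /=.
apply: eq_bigr => t _; rewrite -(IHa (fun i => h i.+1)) big_distrr /=.
by apply: eq_bigr => b _; rewrite big_ord_recl.
Qed.

(* Expanding both determinants by Leibniz's formula, each permutation contributes a
   product of sums over the interlacing entries, evaluated by [sum_iota_binom]. *)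
Lemma sum_det_binom_mx_interlacings m (a : seq nat) :
  size a = m.+2 -> sorted leq a ->
  \sum_(b <- interlacings a) \det (binom_mx m.+1 (nth 0 b)) =
  \det (binom_mx m.+2 (nth 0 a)).
Proof.
move=> size_a /(sortedP 0) a_sorted.
rewrite det_binom_mx_diff /determinant exchange_big /=; apply: eq_bigr => s _.
rewrite -big_distrr /=; congr (_ * _).
rewrite (eq_bigr (fun b => \prod_(i < m.+1) 'C(nth 0 b i, s (inord i))%:R)); last first.
  by move=> b _; apply: eq_bigr => i _; rewrite mxE inord_val.
have := sum_interlacings_prod a (fun i t => 'C(t, s (inord i))%:R).
rewrite size_a => ->.
apply: eq_bigr => i _; rewrite !mxE inord_val sum_iota_binom subnKC //.
by apply: a_sorted; rewrite size_a ltnS.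
Qed.

Lemma size_gt_patterns m (a : seq nat) :
  size a = m.+1 -> sorted leq a ->
  (size (gt_patterns m a))%:R = \det (binom_mx m.+1 (nth 0 a)).
Proof.
elim: m a => [|m IHm] a size_a a_sorted /=; first by rewrite det_mx11 mxE bin0.
rewrite size_allpairs_dep -(sum_det_binom_mx_interlacings size_a a_sorted).
rewrite sumnE big_map natr_sum; apply: eq_big_seq => b b_int.
have /mem_interlacings [size_b _] := b_int.
by apply: IHm; [rewrite size_b size_a | exact: interlacings_sorted b_int].
Qed.

End BinomialDeterminant.

Section Poset.
Variable n : nat.
Implicit Types p q r : T n.

Lemma inPn p : (p \in Pn n) = (p.1 <= p.2).
Proof. by rewrite inE. Qed.

Lemma inAn p : (p \in An n) = (p.1 == 0 :> nat).
Proof. by rewrite inE. Qed.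

Lemma in_Pn_An p : (p \in Pn n :\: An n) = (p \in Pn n) && (p \notin An n).
Proof. by rewrite inE andbC. Qed.

Lemma An_Pn p : p \in An n -> p \in Pn n.
Proof. by rewrite inAn inPn => /eqP ->. Qed.

Lemma covE q p : cov q p =
  [&& q.1 <= q.2, p.1 <= p.2 &
      ((p.1 == q.1.+1 :> nat) && (p.2 == q.2 :> nat))
   || ((q.1 == p.1.+1 :> nat) && (q.2 == p.2.+1 :> nat))].
Proof. by rewrite /cov !inPn. Qed.

Lemma cov_Pn q p : cov q p -> q \in Pn n /\ p \in Pn n.
Proof. by case/and3P. Qed.

Lemma cov_prec q p : cov q p -> prec q p.
Proof.
move=> qp; rewrite /prec connect1 //=.
by apply: contraTneq qp => ->; rewrite covE; lia.
Qed.

Lemma prec_cov_last b p : prec b p -> exists2 r, cov r p & connect (@cov n) b r.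
Proof.
case/andP => /connectP [s + ->]; elim/last_ind: s => [|s r _]; first by rewrite eqxx.
rewrite last_rcons rcons_path => /andP [bs sr] _.
by exists (last b s) => //; apply/connectP; exists s.
Qed.

Lemma connect_cov_homo (f : T n -> nat) q p :
  (forall a b, cov a b -> f a <= f b) -> connect (@cov n) q p -> f q <= f p.
Proof.
move=> f_homo /connectP [s]; elim: s q => [|r s IHs] q /=; first by move=> _ ->.
by case/andP => qr rs p_last; apply: leq_trans (f_homo _ _ qr) (IHs _ rs p_last).
Qed.

Definition height p : nat := 2 * n - 2 * p.2 + p.1.

Lemma cov_height q p : cov q p -> height q < height p.
Proof.
rewrite covE /height => /and3P [? ? ?].
have := ltn_ord p.2; have := ltn_ord q.2; have := ltn_ord p.1; have := ltn_ord q.1.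
lia.
Qed.

Lemma height_le p : height p <= 3 * n.
Proof. by rewrite /height; have := ltn_ord p.2; have := ltn_ord p.1; lia. Qed.

Definition pt (i j : nat) : T n := (inord i, inord j).

Lemma pt_val p : pt p.1 p.2 = p.
Proof. by case: p => i j; rewrite /pt !inord_val. Qed.

Lemma pt1 i j : i <= n -> (pt i j).1 = i :> nat.
Proof. exact: inordK. Qed.

Lemma pt2 i j : j <= n -> (pt i j).2 = j :> nat.
Proof. exact: inordK. Qed.

Lemma cov_pt i j i' j' : i <= n -> j <= n -> i' <= n -> j' <= n ->
  cov (pt i j) (pt i' j') =
  [&& i <= j, i' <= j' & (i' == i.+1) && (j' == j) || (i == i'.+1) && (j == j'.+1)].
Proof. by move=> *; rewrite covE !pt1 ?pt2. Qed.

Lemma pt0_An j : pt 0 j \in An n.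
Proof. by rewrite inAn pt1. Qed.

Lemma cov_pred1 p : p \in Pn n -> p.1 != 0 :> nat -> cov (pt p.1.-1 p.2) p.
Proof.
rewrite inPn => ? ?; have := ltn_ord p.1; have := ltn_ord p.2 => ? ?.
by rewrite -[X in cov _ X](pt_val p) cov_pt; lia.
Qed.

Lemma prec_pt0 p : p \in Pn n -> p.1 != 0 :> nat -> prec (pt 0 p.2) p.
Proof.
move=> p_Pn p1_neq0; apply/andP; split; last first.
  by apply: contraNneq p1_neq0 => <-; rewrite pt1.
suff conn_k k : k <= p.1 -> connect (@cov n) (pt 0 p.2) (pt k p.2).
  by rewrite -[X in connect _ _ X](pt_val p) conn_k.
elim: k => [|k IHk] lt_k; first exact: connect0.
apply: connect_trans (IHk (ltnW lt_k)) (connect1 _).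
move: p_Pn; rewrite inPn => ?; have := ltn_ord p.1; have := ltn_ord p.2 => ? ?.
by rewrite cov_pt; lia.
Qed.

End Poset.

Section Transfer.
Variables (n : nat) (lam : 'I_n.+1 -> nat) (U1 U2 : {set T n}).
Hypothesis U12_dec : is_decomposition U1 U2.
Implicit Types (p q r a b : T n) (g : {ffun T n -> nat}).
Local Open Scope ring_scope.

Lemma U1_dom p : p \in U1 -> p \in Pn n :\: An n.
Proof. by case: U12_dec => _ <- p_U1; rewrite inE p_U1. Qed.

Lemma U2_dom p : p \in U2 -> p \in Pn n :\: An n.
Proof. by case: U12_dec => _ <- p_U2; rewrite inE p_U2 orbT. Qed.

Lemma U1_notin_U2 p : p \in U1 -> p \notin U2.
Proof.
case: U12_dec => U12_0 _ p_U1; apply/negP => p_U2.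
by have := in_set0 p; rewrite -U12_0 inE p_U1 p_U2.
Qed.

Lemma dom_notin_U2 p : p \in Pn n :\: An n -> p \notin U2 -> p \in U1.
Proof. by case: U12_dec => _ <-; rewrite inE => /orP [] // ->. Qed.

Lemma dom_notin_U1 p : p \in Pn n :\: An n -> p \notin U1 -> p \in U2.
Proof. by case: U12_dec => _ <-; rewrite inE => /orP [->|]. Qed.

Lemma Pn_notin_U2 p : p \in Pn n -> p \notin U2 -> p \in An n :|: U1.
Proof.
move=> p_Pn p_U2; rewrite inE; case: (boolP (p \in An n)) => //= p_An.
by apply: dom_notin_U2; rewrite ?in_Pn_An ?p_Pn.
Qed.

Definition order_preserving g := forall q p, cov q p -> (g q <= g p)%N.

Definition extends_marking g :=
  (forall p, p \in An n -> g p = lam p.2) /\ (forall p, p \notin Pn n -> g p = 0%N).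

Definition cover_max g p : nat := \max_(q | cov q p) g q.

Definition transfer g : IPoint n :=
  [ffun d : Dom n => if val d \in U2 then (g (val d))%:Z - (cover_max g (val d))%:Z
                     else (g (val d))%:Z].

Lemma xvE (x : IPoint n) p (p_dom : p \in Pn n :\: An n) : xv x p = x (Sub p p_dom).
Proof. by rewrite /xv insubT. Qed.

Lemma xv_transfer g p : p \in Pn n :\: An n ->
  xv (transfer g) p = if p \in U2 then (g p)%:Z - (cover_max g p)%:Z else (g p)%:Z.
Proof. by move=> p_dom; rewrite (xvE _ p_dom) ffunE. Qed.

Lemma xv_transfer_U1 g p : p \in U1 -> xv (transfer g) p = (g p)%:Z.
Proof. by move=> p_U1; rewrite xv_transfer ?U1_dom // (negbTE (U1_notin_U2 p_U1)). Qed.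

Lemma cover_max_ge g r p : cov r p -> (g r <= cover_max g p)%N.
Proof. exact: (leq_bigmax_cond r). Qed.

Lemma cover_max_le g p : order_preserving g -> (cover_max g p <= g p)%N.
Proof. by move=> g_op; apply/bigmax_leqP => q; apply: g_op. Qed.

Lemma cover_max_attained g p r0 : cov r0 p -> exists2 r, cov r p & cover_max g p = g r.
Proof.
move=> r0p; rewrite /cover_max (@bigop.bigmax_eq_arg _ r0 _ _ r0p).
by case: arg_maxnP => // r; exists r.
Qed.

Lemma order_preserving_prec g q p : order_preserving g -> prec q p -> (g q <= g p)%N.
Proof. by move=> g_op /andP [qp _]; apply: connect_cov_homo qp. Qed.

(* The sum telescopes: the [cover_max] subtracted at each element of the chain
   bounds [g] at the previous one. *)
Lemma transfer_chain_sum g b c a : order_preserving g ->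
  all (mem U2) c -> path (@prec n) b (rcons c a) ->
  \sum_(p <- c) xv (transfer g) p <= (g a)%:Z - (g b)%:Z.
Proof.
move=> g_op; elim: c b => [|p c IHc] b /=.
  by rewrite big_nil subr_ge0 lez_nat andbT => _; apply: order_preserving_prec.
case/andP => p_U2 c_U2 /andP [bp c_path].
rewrite big_cons xv_transfer ?U2_dom // p_U2.
have [r rp br] := prec_cov_last bp.
have gb_le : (g b <= cover_max g p)%N.
  exact: leq_trans (connect_cov_homo g_op br) (cover_max_ge g rp).
have := IHc p c_U2 c_path; rewrite -lez_nat in gb_le; move: (\sum_(_ <- c) _) => S; lia.
Qed.

Lemma ext_transfer g a : extends_marking g -> a \in An n :|: U1 ->
  ext lam (transfer g) a = (g a)%:Z.
Proof.
case=> g_An _; rewrite inE /ext; case: ifP => [a_An _|_ /= a_U1].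
  by rewrite /lamv g_An.
exact: xv_transfer_U1.
Qed.

Lemma transfer_inCO g : order_preserving g -> extends_marking g ->
  inCO lam U1 U2 (transfer g).
Proof.
move=> g_op g_ext; have [g_An _] := g_ext.
split=> [p a p_U1 a_An pa|q b q_U1 b_An bq|p q p_U1 q_U1 pq|p p_U2|].
- by rewrite xv_transfer_U1 // /lamv -g_An // lez_nat order_preserving_prec.
- by rewrite xv_transfer_U1 // /lamv -g_An // lez_nat order_preserving_prec.
- by rewrite !xv_transfer_U1 // lez_nat order_preserving_prec.
- by rewrite xv_transfer ?U2_dom // p_U2 subr_ge0 lez_nat cover_max_le.
split=> [a b c a_A1 b_A1 _ c_U2 c_path|q [//|p c] q_U1 _ /= /andP [p_U2 c_U2] c_path].
  by rewrite !ext_transfer //; apply: transfer_chain_sum.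
have := transfer_chain_sum g_op c_U2 c_path.
rewrite big_cons xv_transfer ?U2_dom // p_U2 xv_transfer_U1 //.
by move: (\sum_(_ <- c) _) => S; lia.
Qed.

Lemma transfer_inj g1 g2 :
  extends_marking g1 -> extends_marking g2 -> transfer g1 = transfer g2 -> g1 = g2.
Proof.
move=> [g1_An g1_Pn] [g2_An g2_Pn] eq_g; apply/ffunP => p.
elim: {p}(height p).+1 {-2}p (ltnSn (height p)) => [//|k IHk] p lt_pk.
case: (boolP (p \in An n)) => p_An; first by rewrite g1_An // g2_An.
case: (boolP (p \in Pn n)) => p_Pn; last by rewrite g1_Pn // g2_Pn.
have p_dom : p \in Pn n :\: An n by rewrite in_Pn_An p_Pn p_An.
have := congr1 (fun x => xv x p) eq_g; rewrite !xv_transfer //.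
case: ifP => _; last by case.
suff -> : cover_max g1 p = cover_max g2 p by move/addIr/eqP; rewrite eqz_nat => /eqP.
by apply: eq_bigr => q qp; apply: IHk; apply: leq_trans (cov_height qp) _.
Qed.

Fixpoint untransfer_rec (y : IPoint n) (fuel : nat) (p : T n) : nat :=
  if fuel is k.+1 then
    if p \in An n then lam p.2
    else if p \in U2 then (absz (xv y p) + \max_(q | cov q p) untransfer_rec y k q)%N
    else if p \in Pn n then absz (xv y p) else 0%N
  else 0%N.

(* The fuel exceeds every [height], so the recursion always reaches [A_n]; [absz]
   loses nothing on the polytope, whose coordinates are nonnegative. *)
Definition untransfer (y : IPoint n) : {ffun T n -> nat} :=
  [ffun p => untransfer_rec y (3 * n).+1 p].

Lemma untransfer_rec_stable y d p :
  (height p < d)%N -> untransfer_rec y d p = untransfer_rec y d.+1 p.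
Proof.
elim: d p => [//|d IHd] p lt_pd /=; do 2 case: ifP => // _; congr (_ + _)%N.
by apply: eq_bigr => q qp; apply: IHd; apply: leq_trans (cov_height qp) _.
Qed.

Lemma untransfer_eq y p : untransfer y p =
  if p \in An n then lam p.2
  else if p \in U2 then (absz (xv y p) + cover_max (untransfer y) p)%N
  else if p \in Pn n then absz (xv y p) else 0%N.
Proof.
rewrite ffunE /=; do 2 case: ifP => // _; congr (_ + _)%N.
apply: eq_bigr => q qp; rewrite ffunE untransfer_rec_stable //.
exact: leq_trans (cov_height qp) (height_le p).
Qed.

Section Untransfer.
Variable y : IPoint n.
Hypothesis y_CO : inCO lam U1 U2 y.

Lemma inCO_ge0 p : p \in Pn n :\: An n -> 0 <= xv y p.
Proof.
move=> p_dom; case: y_CO => _ lam_le _ U2_ge0 _.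
case: (boolP (p \in U2)) => [|p_U2]; first exact: U2_ge0.
move: (p_dom); rewrite in_Pn_An inAn => /andP [p_Pn p1_neq0].
exact: le_trans (lam_le _ _ (dom_notin_U2 p_dom p_U2) (pt0_An _ _) (prec_pt0 p_Pn p1_neq0)).
Qed.

Lemma abs_xv p : p \in Pn n :\: An n -> (absz (xv y p))%:Z = xv y p.
Proof. by move=> p_dom; rewrite gez0_abs // inCO_ge0. Qed.

Lemma untransfer_extends : extends_marking (untransfer y).
Proof.
split=> p p_Pn; rewrite untransfer_eq; first by rewrite p_Pn.
have p_An : p \notin An n by apply: contra p_Pn; apply: An_Pn.
have p_U2 : p \notin U2 by apply: contra p_Pn => /U2_dom; rewrite in_Pn_An => /andP [].
by rewrite (negbTE p_An) (negbTE p_U2) (negbTE p_Pn).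
Qed.

Lemma transfer_untransfer : transfer (untransfer y) = y.
Proof.
apply/ffunP => d; rewrite ffunE.
have d_dom := valP d; have := d_dom; rewrite in_Pn_An => /andP [d_Pn d_An].
have <- : xv y (val d) = y d by rewrite /xv valK.
rewrite untransfer_eq (negbTE d_An).
by case: ifP => d_U2; rewrite d_U2 ?d_Pn ?PoszD ?addrK abs_xv.
Qed.

Hypothesis U12_adm : admissible U1 U2.

Lemma cov_U2_notin_U1 r p : cov r p -> p \in U2 -> r \notin U1.
Proof.
by move=> rp p_U2; apply/negP => r_U1; apply: U12_adm; exists r, p; rewrite cov_prec.
Qed.

(* Following maximal lower covers down from [q], admissibility keeps the chain
   inside [U_2] until it hits [A_n]. *)
Lemma untransfer_U2_chain q : q \in U2 -> exists b c,
  [/\ b \in An n, c != [::], all (mem U2) c, path (@prec n) b c & last b c = q] /\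
  (untransfer y q)%:Z = (lam b.2)%:Z + \sum_(p <- c) xv y p.
Proof.
elim: {q}(height q).+1 {-2}q (ltnSn (height q)) => [//|k IHk] q lt_qk q_U2.
have q_dom := U2_dom q_U2; have := q_dom; rewrite in_Pn_An => /andP [q_Pn q_An].
have q1_neq0 : q.1 != 0 :> nat by rewrite -inAn.
have [r rq max_r] := cover_max_attained (untransfer y) (cov_pred1 q_Pn q1_neq0).
have uq : untransfer y q = (absz (xv y q) + untransfer y r)%N.
  by rewrite untransfer_eq (negbTE q_An) q_U2 max_r.
have [r_Pn _] := cov_Pn rq.
case: (boolP (r \in An n)) => r_An.
  exists r, [:: q]; split; first by rewrite /= q_U2 cov_prec.
  by rewrite uq big_seq1 PoszD abs_xv // addrC untransfer_eq r_An.
have r_U2 : r \in U2.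
  by apply: dom_notin_U1; rewrite ?in_Pn_An ?r_Pn // (cov_U2_notin_U1 rq q_U2).
have lt_rk := leq_trans (cov_height rq) lt_qk.
have [b [c [[b_An c_nil c_U2 c_path c_last] uc]]] := IHk r lt_rk r_U2.
exists b, (rcons c q); split; first split=> //.
- by rewrite -size_eq0 size_rcons.
- by rewrite all_rcons c_U2 andbT.
- by rewrite rcons_path c_path c_last cov_prec.
- by rewrite last_rcons.
by rewrite uq PoszD abs_xv // uc -cats1 big_cat big_seq1 addrC addrA.
Qed.

Lemma untransfer_A1 p : p \in An n :|: U1 -> (untransfer y p)%:Z = ext lam y p.
Proof.
rewrite inE /ext untransfer_eq; case: ifP => //= _ p_U1.
have := U1_dom p_U1; rewrite in_Pn_An => /andP [p_Pn _].
by rewrite (negbTE (U1_notin_U2 p_U1)) p_Pn abs_xv // U1_dom.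
Qed.

Lemma untransfer_order_preserving : order_preserving (untransfer y).
Proof.
move=> r p rp; have [r_Pn p_Pn] := cov_Pn rp.
case: y_CO => le_lam lam_le le_U1 _ [chain_A1 _].
case: (boolP (p \in U2)) => p_U2.
  have := U2_dom p_U2; rewrite in_Pn_An => /andP [_ p_An].
  rewrite [untransfer y p]untransfer_eq (negbTE p_An) p_U2.
  exact: leq_trans (cover_max_ge _ rp) (leq_addl _ _).
have p_A1 := Pn_notin_U2 p_Pn p_U2; rewrite -lez_nat (untransfer_A1 p_A1).
case: (boolP (r \in U2)) => r_U2.
  have [b [c [[b_An c_nil c_U2 c_path c_last] ->]]] := untransfer_U2_chain r_U2.
  have := chain_A1 p b c p_A1; rewrite inE b_An rcons_path c_path c_last cov_prec //.
  move=> /(_ isT c_nil c_U2 isT); rewrite /ext b_An /lamv.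
  move: (\sum_(_ <- c) _) => S; lia.
have r_A1 := Pn_notin_U2 r_Pn r_U2; rewrite (untransfer_A1 r_A1).
move: p_A1 r_A1; rewrite !in_setU /ext.
case: (boolP (p \in An n)) => p_An; case: (boolP (r \in An n)) => r_An //= p_U1 r_U1.
- by move: rp p_An r_An; rewrite covE !inAn; lia.
- exact: le_lam _ _ r_U1 p_An (cov_prec rp).
- exact: lam_le _ _ p_U1 r_An (cov_prec rp).
- exact: le_U1 _ _ r_U1 p_U1 (cov_prec rp).
Qed.

End Untransfer.
End Transfer.

Section Patterns.
Variables (n : nat) (lam : 'I_n.+1 -> nat).
Implicit Types (g : {ffun T n -> nat}) (P : seq (seq nat)).

(* Row [i] of [g] read from column [n] down to column [i], the [k]-th entry
   raised by [k]: weak inequalities of [g] become the strict ones of a pattern. *)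
Definition gt_row g i : seq nat := [seq g (pt n i (n - k)) + k | k <- iota 0 (n - i).+1].

Definition gt_top : seq nat := [seq lam (inord (n - k)) + k | k <- iota 0 n.+1].

Definition gt_rows g : seq (seq nat) := [seq gt_row g i | i <- iota 1 n].

Definition map_of_pattern P : {ffun T n -> nat} :=
  [ffun p => if p \in An n then lam p.2
             else if p \in Pn n then nth 0 (nth [::] P p.1.-1) (n - p.2) - (n - p.2)
             else 0].

Lemma size_gt_row g i : size (gt_row g i) = (n - i).+1.
Proof. by rewrite size_map size_iota. Qed.

Lemma nth_gt_row g i k : k <= n - i -> nth 0 (gt_row g i) k = g (pt n i (n - k)) + k.
Proof. by move=> le_k; rewrite (nth_map 0) ?size_iota ?ltnS // nth_iota ?ltnS. Qed.

Lemma size_gt_top : size gt_top = n.+1.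
Proof. by rewrite size_map size_iota. Qed.

Lemma nth_gt_top k : k <= n -> nth 0 gt_top k = lam (inord (n - k)) + k.
Proof. by move=> le_k; rewrite (nth_map 0) ?size_iota ?ltnS // nth_iota ?ltnS. Qed.

Lemma gt_top_sorted : {homo lam : i j / i <= j >-> j <= i} -> sorted leq gt_top.
Proof.
move=> lam_anti; apply/(sortedP 0) => k; rewrite size_gt_top ltnS => lt_k.
rewrite !nth_gt_top ?(ltnW lt_k) //.
have : lam (inord (n - k)) <= lam (inord (n - k.+1)).
  by apply: lam_anti; rewrite !inordK; lia.
lia.
Qed.

Lemma gt_row0 g : extends_marking lam g -> gt_row g 0 = gt_top.
Proof.
by case=> g_An _; rewrite /gt_row /gt_top subn0; apply: eq_map => k; rewrite g_An // pt0_An.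
Qed.

Lemma gt_row_interlacing g i : order_preserving g -> i < n ->
  gt_row g i.+1 \in interlacings (gt_row g i).
Proof.
move=> g_op lt_in; apply/mem_interlacings; rewrite !size_gt_row.
split=> [|k lt_k]; first lia.
rewrite !nth_gt_row; try lia.
have le_down : g (pt n i (n - k)) <= g (pt n i.+1 (n - k)).
  by apply: g_op; rewrite cov_pt; lia.
have le_diag : g (pt n i.+1 (n - k)) <= g (pt n i (n - k.+1)).
  by apply: g_op; rewrite cov_pt; lia.
lia.
Qed.

Lemma nth_gt_rows g i : i < n -> nth [::] (gt_rows g) i = gt_row g i.+1.
Proof. by move=> lt_in; rewrite (nth_map 0) ?size_iota // nth_iota // add1n. Qed.

Lemma gt_rows_pattern g : order_preserving g -> extends_marking lam g ->
  gt_rows g \in gt_patterns n gt_top.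
Proof.
move=> g_op g_ext; rewrite mem_gt_patterns size_map size_iota eqxx /=.
apply/(pathP [::]) => i; rewrite size_map size_iota => lt_in.
rewrite nth_gt_rows //; case: i lt_in => [|i] lt_in.
  by rewrite -(gt_row0 g_ext) gt_row_interlacing.
by rewrite [nth _ _ i.+1]nth_gt_rows 1?ltnW // gt_row_interlacing.
Qed.

Lemma map_of_gt_rows g : extends_marking lam g -> map_of_pattern (gt_rows g) = g.
Proof.
case=> g_An g_Pn; apply/ffunP => -[i j]; rewrite ffunE.
case: ifP => [ij_An|/negbT]; first by rewrite g_An.
case: ifP => [|/negbT ij_Pn]; last by rewrite g_Pn.
rewrite inPn inAn /= -lt0n => le_ij lt0i.
have := ltn_ord i; have := ltn_ord j => lt_j lt_i.
rewrite nth_gt_rows ?prednK // nth_gt_row; last lia.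
by rewrite addnK subKn ?(pt_val (i, j)) //; lia.
Qed.

Section FromPattern.
Variable P : seq (seq nat).
Hypothesis P_pattern : P \in gt_patterns n gt_top.
Let row i := nth [::] (gt_top :: P) i.

Lemma size_pattern : size P = n.
Proof. by move: P_pattern; rewrite mem_gt_patterns => /andP [/eqP]. Qed.

Lemma pattern_interlacing i : i < n -> row i.+1 \in interlacings (row i).
Proof.
move: P_pattern; rewrite mem_gt_patterns => /andP [_ /(pathP [::]) P_path] lt_in.
by apply: P_path; rewrite size_pattern.
Qed.

Lemma size_pattern_row i : i <= n -> size (row i) = (n - i).+1.
Proof.
elim: i => [|i IHi] le_in; first by rewrite size_gt_top subn0.
have /mem_interlacings [-> _] := pattern_interlacing le_in.
by rewrite IHi ?(ltnW le_in) //=; lia.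
Qed.

Lemma pattern_row_ineq i k : i < n -> k < n - i ->
  nth 0 (row i) k <= nth 0 (row i.+1) k < nth 0 (row i) k.+1.
Proof.
move=> lt_in lt_k; have /mem_interlacings [_ row_int] := pattern_interlacing lt_in.
by apply: row_int; rewrite size_pattern_row //; lia.
Qed.

Lemma pattern_row_ge i k : i <= n -> k <= n - i -> k <= nth 0 (row i) k.
Proof.
elim: i k => [|i IHi] k le_in le_k; first by rewrite /row /= nth_gt_top; lia.
have := IHi k (ltnW le_in); have := pattern_row_ineq (i := i) (k := k); lia.
Qed.

Lemma map_of_patternE p : p \in Pn n ->
  map_of_pattern P p = nth 0 (row p.1) (n - p.2) - (n - p.2).
Proof.
case: p => i j ij_Pn; rewrite ffunE ij_Pn /=.
have := ltn_ord i; have := ltn_ord j => lt_j lt_i.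
case: ifP; rewrite inAn /=; last by case: (nat_of_ord i).
move=> /eqP i0; rewrite /row i0 /= nth_gt_top ?leq_subr // addnK.
by congr lam; apply: val_inj; rewrite /= inordK; lia.
Qed.

Lemma map_of_pattern_order_preserving : order_preserving (map_of_pattern P).
Proof.
move=> q p qp; have [q_Pn p_Pn] := cov_Pn qp.
rewrite !map_of_patternE //; move: qp q_Pn p_Pn; case: q => a b; case: p => c d.
have := ltn_ord a; have := ltn_ord b; have := ltn_ord c; have := ltn_ord d.
rewrite covE !inPn /= => ? ? ? ? /and3P [_ _ /orP [] /andP [/eqP e1 /eqP e2]] ? ?.
- by rewrite e1 e2; have := @pattern_row_ineq a (n - b); lia.
- by rewrite e1 e2; have := @pattern_row_ineq c (n - d.+1); rewrite subnSK; lia.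
Qed.

Lemma map_of_pattern_extends : extends_marking lam (map_of_pattern P).
Proof.
split=> p; rewrite ffunE; first by move=> ->.
by move=> p_Pn; rewrite (negbTE p_Pn) ifF //; apply: contraNF p_Pn; apply: An_Pn.
Qed.

Lemma gt_rows_map_of_pattern : gt_rows (map_of_pattern P) = P.
Proof.
apply: (@eq_from_nth _ [::]) => [|i]; rewrite size_map size_iota ?size_pattern // => lt_in.
rewrite nth_gt_rows //; apply: (@eq_from_nth _ 0) => [|k].
  by rewrite size_gt_row -[nth _ P i]/(row i.+1) size_pattern_row.
rewrite size_gt_row ltnS => le_k; rewrite nth_gt_row // map_of_patternE; last first.
  by rewrite inPn pt1 // pt2 ?leq_subr //; lia.
rewrite pt1 // pt2 ?leq_subr // subKn; last lia.
by have := @pattern_row_ge i.+1 k lt_in ltac:(lia); rewrite /row /=; lia.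
Qed.

End FromPattern.
End Patterns.

Lemma big_pairs_rev (R : Type) (idx : R) (op : Monoid.com_law idx) m
    (F : 'I_m -> 'I_m -> R) :
  \big[op/idx]_(i < m) \big[op/idx]_(j < m | i < j) F i j =
  \big[op/idx]_(i < m) \big[op/idx]_(j < m | i < j) F (rev_ord j) (rev_ord i).
Proof.
rewrite !pair_big_dep (reindex_inj (h := fun p => (rev_ord p.2, rev_ord p.1))) /=.
  by apply: eq_bigl => -[i j] /=; have := ltn_ord i; have := ltn_ord j; lia.
move=> [i j] [i' j'] /= [e1 e2]; have := ltn_ord i; have := ltn_ord j.
have := ltn_ord i'; have := ltn_ord j' => ? ? ? ?.
by congr pair; apply: val_inj => /=; lia.
Qed.

Section Count.
Variables (R : numFieldType) (n : nat) (lam : 'I_n.+1 -> nat).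
Hypothesis lam_anti : {homo lam : i j / i <= j >-> j <= i}.
Local Open Scope ring_scope.

Lemma natr_size_gt_patterns :
  (size (gt_patterns n (gt_top lam)))%:R =
  \prod_(i < n.+1) \prod_(j < n.+1 | (i < j)%N)
    (((lam i)%:R - (lam j)%:R + (j : nat)%:R - (i : nat)%:R)
       / ((j : nat)%:R - (i : nat)%:R))
  :> R.
Proof.
rewrite size_gt_patterns ?size_gt_top ?gt_top_sorted // det_binom_mx big_pairs_rev.
apply: eq_bigr => i _; apply: eq_bigr => j lt_ij.
have := ltn_ord i; have := ltn_ord j => lt_jn lt_in.
have subrev (k : nat) : (k < n.+1)%N -> (n - (n.+1 - k.+1))%N = k by lia.
rewrite !nth_gt_top /= ?subrev // ?inord_val ?natrD ?natrB; try lia.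
by congr (_ / _); ring.
Qed.

End Count.

Theorem corollary6p4 (n : nat) (lam : 'I_n.+1 -> nat) (U1 U2 : {set T n}) :
  (1 <= n)%N ->
  (forall i j : 'I_n.+1, (i <= j)%N -> (lam j <= lam i)%N) ->
  is_decomposition U1 U2 ->
  admissible U1 U2 ->
  exists s : seq (IPoint n),
    [/\ uniq s,
        forall x : IPoint n, x \in s <-> inCO lam U1 U2 x &
        ((size s)%:R =
          \prod_(i < n.+1) \prod_(j < n.+1 | (i < j)%N)
            (((lam i)%:R - (lam j)%:R + (j : nat)%:R - (i : nat)%:R)
               / ((j : nat)%:R - (i : nat)%:R)) :> rat)%R].
Proof.
move=> _ lam_anti U12_dec U12_adm.
exists [seq transfer U2 (map_of_pattern lam P) | P <- gt_patterns n (gt_top lam)]; split.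
- rewrite map_inj_in_uniq ?gt_patterns_uniq // => P1 P2 P1_pat P2_pat eq_x.
  rewrite -(gt_rows_map_of_pattern P1_pat) -(gt_rows_map_of_pattern P2_pat).
  by congr gt_rows; apply: transfer_inj eq_x; apply: map_of_pattern_extends.
- move=> x; split=> [/mapP [P P_pat ->]|x_CO].
    apply: (transfer_inCO U12_dec); first exact: map_of_pattern_order_preserving P_pat.
    exact: map_of_pattern_extends.
  have y_op := untransfer_order_preserving U12_dec x_CO U12_adm.
  have y_ext := untransfer_extends lam U12_dec x.
  apply/mapP; exists (gt_rows (untransfer lam U2 x)); first exact: gt_rows_pattern.
  by rewrite map_of_gt_rows // (transfer_untransfer U12_dec x_CO).
by rewrite size_map natr_size_gt_patterns.
Qed.
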